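(* Let $X$ be a compact metric space and $(f_n)_{n\ge1}$ a sequence of continuous maps $X\to X$ converging uniformly to a function $\phi\colon X\to X$. Then $\phi^q\circ f_1^p=f_1^{p+q}$ for every $p\in\mathbb{N}^*$ and every $q\in\beta(\mathbb{N})$. In particular, the Ellis semigroup $E(X,\phi)$ acts on $E(X,f_{1,\infty})^*$: $h\circ g\in E(X,f_{1,\infty})^*$ for all $h\in E(X,\phi)$ and $g\in E(X,f_{1,\infty})^*$.
   Context: $\mathbb{N}=\{1,2,\dots\}$, $\beta(\mathbb{N})$ the ultrafilters on $\mathbb{N}$ (principal ones identified with $n\in\mathbb{N}$), $\mathbb{N}^*$ the free ones. For $r\in\mathbb{N}^*$, $r\text{-}\lim_n x_n$ is the unique $y$ with $\{n:x_n\in V\}\in r$ for all neighbourhoods $V$ of $y$. $f_1^n=f_n\circ\cdots\circ f_1$, $f_1^r(x)=r\text{-}\lim_n f_1^n(x)$ for $r\in\mathbb{N}^*$, $E(X,f_{1,\infty})^*=\{f_1^r:r\in\mathbb{N}^*\}$. $\phi^n$ is the $n$-fold composition, $\phi^q(x)=q\text{-}\lim_n\phi^n(x)$ for $q\in\mathbb{N}^*$, and $E(X,\phi)$ is the closure of $\{\phi^n:n\in\mathbb{N}\}$ in $X^X$ (pointwise topology), which equals $\{\phi^q:q\in\beta(\mathbb{N})\}$. Addition on $\beta(\mathbb{N})$: $p+q=\{A:\{n:\{m:m+n\in A\}\in p\}\in q\}$. *)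

From HB Require Import structures.
From mathcomp Require Import all_boot all_order all_algebra.
From mathcomp Require Import all_classical all_reals all_analysis.
From Stdlib Require Import ClassicalEpsilon.
Set Implicit Arguments. Unset Strict Implicit. Unset Printing Implicit Defensive.
Import Order.TTheory GRing.Theory Num.Theory.
Local Open Scope classical_set_scope.
Local Open Scope ring_scope.

(* Ultrafilters on N = {1,2,...}: ultrafilters on nat containing the positive integers. *)
Definition betaN (r : set_system nat) : Prop :=
  UltraFilter r /\ r [set n | (0 < n)%N].

Definition freeU (r : set_system nat) : Prop :=
  betaN r /\ forall n : nat, ~ r [set n].

Definition addU (p q : set_system nat) : set_system nat :=
  [set A | q [set n | p [set m | A (m + n)%N]]].

Definition is_ulim {T : topologicalType} (r : set_system nat) (s : nat -> T) (y : T) : Prop :=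
  forall V, nbhs y V -> r [set n | V (s n)].

(* r-lim_n s_n: "the" y which is an r-limit of s (unique in a Hausdorff space) *)
Definition ulim {T : topologicalType} (r : set_system nat) (s : nat -> T) : T :=
  epsilon (inhabits (s 0%N)) (fun y => is_ulim r s y).

(* f_1^n = f_n o ... o f_1 (f_1^0 = id; f 0 is never used) *)
Fixpoint comp1 {T : Type} (f : nat -> T -> T) (n : nat) : T -> T :=
  match n with
  | 0%N => id
  | k.+1 => f k.+1 \o comp1 f k
  end.

Definition f1r {T : topologicalType} (f : nat -> T -> T) (r : set_system nat) : T -> T :=
  fun x => ulim r (fun n => comp1 f n x).

Definition phiq {T : topologicalType} (phi : T -> T) (q : set_system nat) : T -> T :=
  fun x => ulim q (fun n => iter n phi x).

Definition Estar {T : topologicalType} (f : nat -> T -> T) : set (T -> T) :=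
  [set g | exists r, freeU r /\ g = f1r f r].

Definition Ellis {T : topologicalType} (phi : T -> T) : set (T -> T) :=
  closure ([set iter n phi | n in [set n : nat | (0 < n)%N]] : set {ptws T -> T}).

Definition unif_cvg {R : realType} {T : pseudoMetricType R}
  (f : nat -> T -> T) (phi : T -> T) : Prop :=
  forall e : R, 0 < e -> \forall n \near \oo, forall x : T, ball (phi x) e (f n x).

From mathcomp Require Import all_boot all_order all_algebra.
From mathcomp Require Import all_classical all_reals all_analysis.
From Stdlib Require Import ClassicalEpsilon.
Set Implicit Arguments. Unset Strict Implicit. Unset Printing Implicit Defensive.
Import Order.TTheory GRing.Theory Num.Theory.
Local Open Scope classical_set_scope.
Local Open Scope ring_scope.

(* A uniform limit of continuous maps is continuous, and a free ultrafilter p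
   contains every tail of N.  Hence, once f_1^m(x) tends to y along p, so does
   f_{m+n+1}(f_1^{m+n}(x)) to phi(phi^n(y)): the extra map is uniformly close
   to phi for large indices.  By induction the p-limit of f_1^{m+n}(x) is
   phi^n(f_1^p(x)), and taking the q-limit in n of these p-limits is exactly
   the (p+q)-limit of f_1^m(x).  For the second claim, each h in E(X,phi) is
   phi^q for any ultrafilter q refining the trace on N of the neighbourhoods
   of h, so h o f_1^p = f_1^(p+q) with p + q free. *)

Lemma ulim_unique {T : topologicalType} (r : set_system nat) {Pr : ProperFilter r}
    (s : nat -> T) y :
  hausdorff_space T -> is_ulim r s y -> ulim r s = y.
Proof.
move=> hT sy.
have sr : is_ulim r s (ulim r s) by apply: epsilon_spec; exists y.
exact: (@cvg_unique _ hT (s @ r) _ _ _ sr sy).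
Qed.

Lemma is_ulim_compact {T : topologicalType} (r : set_system nat) (s : nat -> T) :
  compact [set: T] -> UltraFilter r -> is_ulim r s (ulim r s).
Proof.
move=> cT Ur; apply: epsilon_spec.
have [y [_ /= cy]] := cT (s @ r) _ (@filterT _ _ _).
exists y => V yV.
have [//|rC] := in_ultra_setVsetC [set n | V (s n)] Ur.
by have [z [/= + Vz]] := cy (~` V) V rC yV.
Qed.

Section PseudoMetricUltraLimits.
Context {R : realType} {X : pseudoMetricType R}.

Lemma is_ulim_ballP (r : set_system nat) {Fr : Filter r} (s : nat -> X) y :
  is_ulim r s y <-> forall e : R, 0 < e -> r [set n | ball y e (s n)].
Proof.
split => [sy e e0|sy V /nbhs_ballP [e /= e0 sV]].
- by apply: sy; exact: nbhsx_ballx.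
- by apply: filterS (sy e e0) => n; exact: sV.
Qed.

Lemma is_ulim_addU (p q : set_system nat) {Fp : Filter p} {Fq : Filter q}
    (s z : nat -> X) w :
  (forall n, is_ulim p (fun m => s (m + n)%N) (z n)) -> is_ulim q z w ->
  is_ulim (addU p q) s w.
Proof.
move=> sz zw V /nbhs_ballP [e /= e0 sV].
have e2 : 0 < e / 2 by rewrite divr_gt0.
apply: filterS (zw _ (nbhsx_ballx w _ e2)) => n /= wzn.
apply: filterS (sz n _ (nbhsx_ballx (z n) _ e2)) => m /= zsm.
by apply: sV; rewrite [e]splitr; exact: ball_triangle wzn zsm.
Qed.

End PseudoMetricUltraLimits.

Lemma freeU_tail (r : set_system nat) N : freeU r -> r [set m | (N <= m)%N].
Proof.
move=> [[Ur _] r_free]; elim: N => [|N IH]; first exact: filterS (@filterT _ _ _).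
have [//|rC] := in_ultra_setVsetC [set m | (N.+1 <= m)%N] Ur.
exfalso; apply: (r_free N); apply: filterS (filterI IH rC) => m [/= Nm].
by move/negP; rewrite -leqNgt => mN; apply/eqP; rewrite eqn_leq mN.
Qed.

Section AddUltra.
Variables p q : set_system nat.

Lemma addU_filter : Filter p -> Filter q -> Filter (addU p q).
Proof.
move=> Fp Fq; split => [|A B|A B AB]; rewrite /addU /=.
- by apply: filterS (@filterT _ q _) => n _; exact: filterT.
- by move=> qA qB; apply: filterS (filterI qA qB) => n [/= pA pB]; exact: filterI.
- by apply: filterS => n /=; apply: filterS => m /=; exact: AB.
Qed.

Lemma addU_proper : ProperFilter p -> ProperFilter q -> ProperFilter (addU p q).
Proof.
move=> Pp Pq; split; last by apply: addU_filter; exact: filter_filter.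
rewrite /addU => /= q0; have [n /= pn] := filter_ex q0.
by have [m] := filter_ex pn.
Qed.

Lemma addU_ultra : UltraFilter p -> UltraFilter q -> UltraFilter (addU p q).
Proof.
move=> Up Uq; split; first exact: addU_proper.
move=> G PG pqG; rewrite predeqE => A; split => [GA|]; last exact: pqG.
have [//|qC] := in_ultra_setVsetC [set n | p [set m | A (m + n)%N]] Uq.
have pqC : addU p q (~` A).
  apply: filterS qC => n /= npA.
  by have [//|] := in_ultra_setVsetC [set m | A (m + n)%N] Up.
by have [z []] := filter_ex (filterI GA (pqG _ pqC)).
Qed.

Lemma freeU_addU : freeU p -> betaN q -> freeU (addU p q).
Proof.
move=> [[Up p_pos] p_free] [Uq q_pos].
split; first split; first exact: addU_ultra.
- apply: filterS (@filterT _ q _) => n _; apply: filterS p_pos => m /= m0.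
  by rewrite addn_gt0 m0.
- move=> k; rewrite /addU => /= qk; have [n /= pn] := filter_ex qk.
  apply: (p_free (k - n)%N).
  by apply: filterS pn => m /= <-; rewrite addnK.
Qed.

End AddUltra.

Section UniformLimit.
Context {R : realType} {X : pseudoMetricType R}.
Variables (f : nat -> X -> X) (phi : X -> X).
Hypothesis f_cont : forall n : nat, (0 < n)%N -> continuous (f n).
Hypothesis f_unif : unif_cvg f phi.

Lemma unif_cvg_uniform : {uniform, f @ \oo --> phi}.
Proof.
move=> P /uniform_nbhs [E [+ EP]]; rewrite -entourage_from_ballE.
move=> [e /= e0 eE]; apply: filterS (f_unif e0) => n fn.
by apply: EP => x _; apply: eE; exact: fn.
Qed.

Lemma unif_cvg_continuous : continuous phi.
Proof.
apply: (uniform_limit_continuous _ _ unif_cvg_uniform).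
by exists 1%N => // n /=; exact: f_cont.
Qed.

Lemma is_ulim_unif_step (p : set_system nat) (s : nat -> X) y k : freeU p ->
  is_ulim p s y -> is_ulim p (fun m => f (m + k).+1 (s m)) (phi y).
Proof.
move=> p_free sy; have [[[[_ Fp] _] _] _] := p_free.
apply/is_ulim_ballP => e e0; have e2 : 0 < e / 2 by rewrite divr_gt0.
have [N _ fN] := f_unif e2.
have phi_s : p [set m | ball (phi y) (e / 2) (phi (s m))].
  exact: sy _ (unif_cvg_continuous (nbhsx_ballx _ _ e2)).
apply: filterS (filterI phi_s (freeU_tail N p_free)) => m [/= ys Nm].
rewrite [e]splitr; apply: ball_triangle ys (fN _ _ (s m)) => /=.
exact: leq_trans Nm (leqW (leq_addr k m)).
Qed.

Lemma is_ulim_comp1_shift (p : set_system nat) x y : freeU p ->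
  is_ulim p (comp1 f ^~ x) y ->
  forall n, is_ulim p (fun m => comp1 f (m + n) x) (iter n phi y).
Proof.
move=> p_free xy; elim=> [|n IH].
  by under eq_fun do rewrite addn0.
under eq_fun do rewrite addnS.
exact: is_ulim_unif_step p_free IH.
Qed.

End UniformLimit.

Lemma phiq_comp_f1r (R : realType) (X : metricType R)
    (f : nat -> X -> X) (phi : X -> X) (p q : set_system nat) :
  compact [set: X] -> (forall n : nat, (0 < n)%N -> continuous (f n)) ->
  unif_cvg f phi -> freeU p -> betaN q ->
  phiq phi q \o f1r f p = f1r f (addU p q).
Proof.
move=> cX f_cont f_unif p_free [Uq _]; have [[Up _] _] := p_free.
have Upq := addU_ultra Up Uq.
apply/funext => x /=; apply/esym/ulim_unique; first exact: metric_hausdorff.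
rewrite /phiq; apply: (is_ulim_addU (s := comp1 f ^~ x) _ (is_ulim_compact cX Uq)).
exact: (is_ulim_comp1_shift (x := x) f_cont f_unif p_free (is_ulim_compact cX Up)).
Qed.

Lemma Ellis_phiq {T : topologicalType} (phi h : T -> T) :
  hausdorff_space T -> Ellis phi h -> exists2 q, betaN q & h = phiq phi q.
Proof.
move=> hT Eh.
(* The trace on N of the neighbourhood filter of h along n |-> phi^n; it is
   proper since h adheres to the positive iterates of phi. *)
pose F : set_system nat := [set A | exists2 B : set {ptws T -> T},
  nbhs (h : {ptws T -> T}) B & [set n | (0 < n)%N /\ B (iter n phi)] `<=` A].
have PF : ProperFilter F.
  split.
  - move=> [B hB B0]; have [g [[n /= n0 <-] Bn]] := Eh B hB.
    exact: (B0 n).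
  - split=> [|A1 A2 [B1 hB1 sB1] [B2 hB2 sB2]|A1 A2 A12 [B hB sB]].
    + by exists setT; [exact: filterT|].
    + exists (B1 `&` B2); first exact: filterI.
      by move=> n [/= n0 [b1 b2]]; split; [apply: sB1|apply: sB2].
    + by exists B => // n /sB; exact: A12.
have [q [Uq Fq]] := ultraFilterLemma PF.
exists q; first by split=> //; apply: Fq; exists setT => [|n []//]; exact: filterT.
apply/funext => x; apply/esym/ulim_unique => // V hxV; apply: Fq.
by exists (proj x @^-1` V) => [|n []//]; exact: proj_continuous.
Qed.

Theorem theorem3p9 (R : realType) (X : metricType R)
  (f : nat -> X -> X) (phi : X -> X) :
  compact [set: X] ->
  (forall n : nat, (0 < n)%N -> continuous (f n)) ->
  unif_cvg f phi ->
  (forall p q : set_system nat, freeU p -> betaN q ->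
     phiq phi q \o f1r f p = f1r f (addU p q)) /\
  (forall h g : X -> X, Ellis phi h -> Estar f g -> Estar f (h \o g)).
Proof.
move=> cX f_cont f_unif.
have phiq_f1r := phiq_comp_f1r cX f_cont f_unif.
split; first exact: phiq_f1r.
move=> h _ /(Ellis_phiq (@metric_hausdorff _ X)) [q q_beta ->] [p [p_free ->]].
by exists (addU p q); split; [exact: freeU_addU | exact: phiq_f1r].
Qed.
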